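(* Let $\alpha=(\alpha_1,\dots,\alpha_n)$ be a composition, $k\ge 0$ an integer, and $\lambda$ a partition with $\lambda_1-k\le n$. Let $\mathcal{T}$ be a semistandard Young tableau of shape $\mathcal{S}(\lambda,\alpha;k)$ whose reading word is lattice. Then every entry in the first row of the foundation $\lambda$ of $\mathcal{T}$ belongs to the set \[R_{\alpha,k}=\Big\{1+\sum_{i=1}^{j}\alpha_{n+1-i}\ :\ j=1,2,\dots,n\Big\}\cup\begin{cases}\{1\}&\text{if }k>0,\\ \emptyset&\text{if }k=0.\end{cases}\] Furthermore, the value $1$ occurs at most $k$ times in that row, and every other value occurs at most once in that row.
   Context: Diagrams use English convention: boxes $(r,c)$ with row index $r$ increasing downward and column index $c$ increasing rightward. For a composition $\alpha=(\alpha_1,\dots,\alpha_n)$ (positive parts), $|\alpha|=\sum_i\alpha_i$, and $\Delta_\alpha$ is the $180^\circ$ rotation of the Ferrers diagram of the partition $(n^{\alpha_n},(n-1)^{\alpha_{n-1}},\dots,1^{\alpha_1})$; concretely $\Delta_\alpha$ occupies rows $1,\dots,|\alpha|$, each row right-justified ending in column $n$, row lengths weakly increasing downward, with exactly $\alpha_i$ rows of length $i$. For $k\ge0$ and a partition $\lambda$ with $\lambda_1-k\le n$, $\mathcal{S}(\lambda,\alpha;k)$ (a ''fat staircase with bad foundation'') is the diagram consisting of $\Delta_\alpha$ together with a copy of the Ferrers diagram of $\lambda$ (the foundation) placed so that row $r$ of $\lambda$ occupies row $|\alpha|+r$, columns $1-k$ through $\lambda_r-k$; i.e. the first row of $\lambda$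 starts one row below and $k$ columns to the left of the bottom-left box of $\Delta_\alpha$. A tableau is a filling of the boxes with positive integers; it is semistandard (SSYT) if rows weakly increase left to right and columns strictly increase top to bottom. The reading word reads rows right to left, from the top row to the bottom row. A sequence is lattice if, for every $j\ge1$ and every initial segment, the number of $j$'s is at least the number of $(j+1)$'s. *)

From mathcomp Require Import all_boot all_order all_algebra.
Set Implicit Arguments. Unset Strict Implicit. Unset Printing Implicit Defensive.
Import GRing.Theory Num.Theory.

(* Diagrams: boxes (r, c) with r : nat (rows, 1-based, increasing downward)
   and c : int (columns, increasing rightward; may be <= 0 for the foundation). *)

Definition is_composition (alpha : seq nat) : bool := all (fun a => 0 < a)%N alpha.

Definition is_partition (lam : seq nat) : bool :=
  sorted geq lam && all (fun a => 0 < a)%N lam.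

Definition csize (alpha : seq nat) : nat := sumn alpha.

(* Row lengths of Delta_alpha, top to bottom: alpha_1 rows of length 1,
   then alpha_2 rows of length 2, ..., alpha_n rows of length n. *)
Definition delta_rowlens (alpha : seq nat) : seq nat :=
  flatten [seq nseq (nth 0 alpha i) i.+1 | i <- iota 0 (size alpha)].

Definition nrows (alpha lam : seq nat) : nat := (csize alpha + size lam)%N.

Definition row_len (alpha lam : seq nat) (r : nat) : nat :=
  if (1 <= r <= csize alpha)%N then nth 0 (delta_rowlens alpha) r.-1
  else if (csize alpha < r <= nrows alpha lam)%N then nth 0 lam (r - csize alpha).-1
  else 0.

(* Column of the rightmost box of row r: rows of Delta_alpha end in column n;
   row r' of the foundation ends in column lam_r' - k. *)
Definition row_hi (alpha lam : seq nat) (k : nat) (r : nat) : int :=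
  if (r <= csize alpha)%N then Posz (size alpha)
  else (Posz (nth 0 lam (r - csize alpha).-1) - Posz k)%R.

Definition row_cols (alpha lam : seq nat) (k r : nat) : seq int :=
  [seq (row_hi alpha lam k r - Posz i)%R | i <- iota 0 (row_len alpha lam r)].

Definition in_shape (alpha lam : seq nat) (k r : nat) (c : int) : bool :=
  (1 <= r <= nrows alpha lam)%N &&
  ((row_hi alpha lam k r - Posz (row_len alpha lam r) + 1 <= c)%R &&
   (c <= row_hi alpha lam k r)%R).

Definition is_SSYT (alpha lam : seq nat) (k : nat) (T : nat -> int -> nat) : Prop :=
  [/\ (forall r c, in_shape alpha lam k r c -> (0 < T r c)%N),
      (forall r c c', in_shape alpha lam k r c -> in_shape alpha lam k r c' ->
          (c <= c')%R -> (T r c <= T r c')%N) &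
      (forall r r' c, in_shape alpha lam k r c -> in_shape alpha lam k r' c ->
          (r < r')%N -> (T r c < T r' c)%N)].

(* Reading word: rows read right to left, from the top row to the bottom row. *)
Definition reading_word (alpha lam : seq nat) (k : nat) (T : nat -> int -> nat) : seq nat :=
  flatten [seq [seq T r c | c <- row_cols alpha lam k r]
          | r <- iota 1 (nrows alpha lam)].

Definition lattice (w : seq nat) : Prop :=
  forall (m j : nat), (1 <= j)%N ->
    (count_mem j.+1 (take m w) <= count_mem j (take m w))%N.

Definition Rset (alpha : seq nat) (k : nat) (v : nat) : bool :=
  has (fun j => v == (1 + sumn (drop (size alpha - j) alpha))%N) (iota 1 (size alpha))
  || ((0 < k)%N && (v == 1%N)).

From mathcomp Require Import all_boot all_order all_algebra zify.
Import GRing.Theory Num.Theory.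

(* Column strictness forces every column of the staircase Delta_alpha to carry
   at least 1, 2, ..., h from its top box down, and the lattice condition,
   read row by row, forbids anything larger; so the staircase is filled
   canonically and contributes exactly #{i : h_i >= v} letters v, where
   h_i = alpha_(i+1) + ... + alpha_n are the column heights, pairwise distinct
   since the parts of alpha are positive.  An entry y >= 2 of the first
   foundation row is read after the entries to its right, which are >= y, so
   latticeness demands one more y-1 than the staircase supplies beyond its y's:
   there must be a column of height y-1, which puts y in R_(alpha,k), and by
   distinctness y occurs at most once.  A box of that row lying under the
   staircase has a positive entry above it, so 1 fits only in the k leftmost
   boxes, and not at all when k = 0. *)

Set Implicit Arguments.
Unset Strict Implicit.

Lemma eq_count_add (T : Type) (a1 a2 a3 : pred T) (s : seq T) :
  (forall x, a1 x + a2 x = a3 x) -> count a1 s + count a2 s = count a3 s.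
Proof. by move=> a123; elim: s => //= x s IH; rewrite -IH -a123; lia. Qed.

Lemma sub_in_count (T : eqType) (a1 a2 : pred T) (s : seq T) :
  {in s, subpred a1 a2} -> count a1 s <= count a2 s.
Proof.
elim: s => //= x s IH sub12; apply: leq_add.
  by case: (a1 x) (sub12 x (mem_head x s)) => // /(_ isT) ->.
by apply: IH => y ys; apply: sub12; rewrite inE ys orbT.
Qed.

Lemma count_iota_prefix (P : pred nat) i n : i <= n ->
  count P (iota 0 i) = count (fun j => (j < i) && P j) (iota 0 n).
Proof.
move=> le_in; rewrite -(filter_iota_ltn 0 le_in) count_filter.
by apply: eq_count => j /=; rewrite andbC.
Qed.

Lemma count_iota_geq m n : count (fun j => m <= j) (iota 0 n) = n - m.
Proof.
elim: n => // n IH; rewrite -addn1 iotaD count_cat IH /=; case: (leqP m n); lia.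
Qed.

Lemma count_iota_le1 (P : pred nat) m :
  (forall j, j < m -> P j -> count P (iota 0 j) = 0) -> count P (iota 0 m) <= 1.
Proof.
elim: m => // m IH first_P; rewrite -addn1 iotaD count_cat /= addn0.
case Pm: (P m); first by rewrite (first_P m (ltnSn m) Pm).
by rewrite addn0; apply: IH => j lt_jm; apply: first_P; lia.
Qed.

Lemma count_leq_pred (T : Type) (f : T -> nat) x s : 0 < x ->
  count (fun y => x.-1 <= f y) s = count (fun y => x <= f y) s + count (fun y => f y == x.-1) s.
Proof. by move=> x_gt0; apply/esym/eq_count_add => y; case: ltngtP; lia. Qed.

Lemma sorted_nseq_cat a x s :
  sorted leq s -> all (leq x) s -> sorted leq (nseq a x ++ s).
Proof.
move=> sorted_s ge_x; elim: a => //= a IH.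
by rewrite (path_sortedE leq_trans) IH all_cat all_nseq leqnn ge_x orbT.
Qed.

(* A lattice word must supply an extra [x-1] before each letter [x >= 2];
   letters [>= x] read in between cannot help. *)
Lemma lattice_count_lt (p u s : seq nat) x :
  lattice (p ++ u ++ x :: s) -> 1 < x -> all (leq x) u ->
  count_mem x p + count_mem x u < count_mem x.-1 p.
Proof.
move=> latt gt1x ge_x.
have := latt (size (p ++ u ++ [:: x])) x.-1.
rewrite (_ : p ++ u ++ x :: s = (p ++ u ++ [:: x]) ++ s) ?take_size_cat -?catA //.
have -> : x.-1.+1 = x by lia.
move=> /(_ ltac:(lia)); rewrite !count_cat /= eqxx.
have /count_memPn -> : x.-1 \notin u.
  by apply/negP => /(allP ge_x); lia.
by rewrite (_ : (x == x.-1) = false); [lia | apply/negbTE; lia].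
Qed.

Definition stair_rowlens (s : nat) (al : seq nat) : seq nat :=
  flatten [seq nseq (nth 0 al i) (s + i).+1 | i <- iota 0 (size al)].

Lemma delta_stair_rowlens al : delta_rowlens al = stair_rowlens 0 al.
Proof. by []. Qed.

Lemma stair_rowlens_cons s a al :
  stair_rowlens s (a :: al) = nseq a s.+1 ++ stair_rowlens s.+1 al.
Proof.
rewrite /stair_rowlens /= addn0 (iotaDl 1 0) -map_comp; congr (_ ++ flatten _).
by apply: eq_map => i /=; rewrite add1n addSnnS.
Qed.

Lemma size_stair_rowlens s al : size (stair_rowlens s al) = sumn al.
Proof.
by elim: al s => // a al IH s; rewrite stair_rowlens_cons size_cat size_nseq IH.
Qed.

Lemma stair_rowlens_bounds s al :
  all (fun l => s < l <= s + size al) (stair_rowlens s al).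
Proof.
elim: al s => // a al IH s; rewrite stair_rowlens_cons all_cat all_nseq /=.
apply/andP; split; first by apply/orP; right; lia.
by apply: sub_all (IH s.+1) => l /=; lia.
Qed.

Lemma sorted_stair_rowlens s al : sorted leq (stair_rowlens s al).
Proof.
elim: al s => // a al IH s; rewrite stair_rowlens_cons sorted_nseq_cat //.
by apply: sub_all (stair_rowlens_bounds s.+1 al) => l /andP[/ltnW].
Qed.

Lemma count_stair_rowlens s al i :
  count (fun l => s + i < l) (stair_rowlens s al) = sumn (drop i al).
Proof.
elim: al s i => // a al IH s [|i]; rewrite stair_rowlens_cons count_cat count_nseq.
  rewrite addn0 ltnSn mul1n drop0 /=; congr (_ + _).
  rewrite -(size_stair_rowlens s.+1 al); apply/eqP; rewrite -all_count.
  by apply: sub_all (stair_rowlens_bounds s.+1 al) => l /andP[/ltnW].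
rewrite (_ : s + i.+1 < s.+1 = false) /=; last by lia.
by rewrite -(IH s.+1 i); apply: eq_count => l; rewrite addSnnS.
Qed.

Lemma sumn_drop_leq al i j : i <= j -> sumn (drop j al) <= sumn (drop i al).
Proof.
move=> le_ij; rewrite -(subnKC le_ij) addnC -drop_drop.
by rewrite -{2}(cat_take_drop (j - i) (drop i al)) sumn_cat leq_addl.
Qed.

Lemma sumn_drop_ltn al i j : is_composition al -> i < j -> i < size al ->
  sumn (drop j al) < sumn (drop i al).
Proof.
move=> /allP al_gt0 lt_ij lt_i; rewrite (drop_nth 0 lt_i) /=.
have : 0 < nth 0 al i := al_gt0 _ (mem_nth 0 lt_i).
have := sumn_drop_leq al lt_ij; lia.
Qed.

Lemma count_sumn_drop_le1 al v : is_composition al ->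
  count (fun i => sumn (drop i al) == v) (iota 0 (size al)) <= 1.
Proof.
move=> comp_al; apply: count_iota_le1 => j lt_j /eqP <-.
rewrite (eq_in_count (a2 := pred0)) ?count_pred0 // => i.
rewrite mem_iota add0n => /andP[_ lt_ij]; apply/negbTE.
by rewrite neq_ltn orbC sumn_drop_ltn //; lia.
Qed.

Lemma Rset_sumn_drop alpha k i : i < size alpha ->
  Rset alpha k (1 + sumn (drop i alpha)).
Proof.
move=> lt_i; apply/orP; left; apply/hasP; exists (size alpha - i).
  by rewrite mem_iota; lia.
by rewrite subKn // ltnW.
Qed.

Section ColumnHeights.

Variable alpha : seq nat.

Lemma size_delta_rowlens : size (delta_rowlens alpha) = csize alpha.
Proof. by rewrite delta_stair_rowlens size_stair_rowlens. Qed.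

Lemma delta_rowlens_leq r : nth 0 (delta_rowlens alpha) r <= size alpha.
Proof.
case: (ltnP r (size (delta_rowlens alpha))) => [lt_r|]; last by move/(nth_default 0) ->.
by have /allP/(_ _ (mem_nth 0 lt_r))/andP[] := stair_rowlens_bounds 0 alpha.
Qed.

(* Number of boxes of column [n - i] of the staircase in its first [r] rows. *)
Definition col_height r i := count (fun l => i < l) (take r (delta_rowlens alpha)).

Lemma col_heightS r i : r < csize alpha ->
  col_height r.+1 i = col_height r i + (i < nth 0 (delta_rowlens alpha) r).
Proof.
move=> lt_r; rewrite /col_height (take_nth 0) ?size_delta_rowlens //.
by rewrite -cats1 count_cat /= addn0.
Qed.

Lemma col_height_full i : col_height (csize alpha) i = sumn (drop i alpha).
Proof.
by rewrite /col_height -size_delta_rowlens take_size (count_stair_rowlens 0).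
Qed.

Lemma col_height_anti r i i' : i <= i' -> col_height r i' <= col_height r i.
Proof. by move=> le_ii'; apply: sub_count => l /=; lia. Qed.

(* Rows of the staircase get longer downwards, so a column meeting one of the
   first [r] rows meets row [r]. *)
Lemma col_height_gt0 r i : 0 < col_height r i -> r <= csize alpha ->
  0 < r /\ i < nth 0 (delta_rowlens alpha) r.-1.
Proof.
rewrite /col_height -has_count => /hasP[l /(nthP 0)[j lt_j <-] lt_i] le_r.
rewrite size_takel ?size_delta_rowlens // in lt_j.
rewrite nth_take // in lt_i; split; first by lia.
apply: leq_trans lt_i _.
apply: (sorted_leq_nth leq_trans leqnn 0 (sorted_stair_rowlens 0 alpha));
  rewrite ?inE -?delta_stair_rowlens ?size_delta_rowlens; lia.
Qed.

End ColumnHeights.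

Section Shape.

Variables (alpha lam : seq nat) (k : nat).

Lemma in_shape_row_hi r j : 0 < r <= nrows alpha lam ->
  in_shape alpha lam k r (row_hi alpha lam k r - Posz j)%R = (j < row_len alpha lam r).
Proof.
case/andP=> r_gt0 r_le; rewrite /in_shape r_gt0 r_le /=.
by apply/idP/idP => [/andP[le_lo _] | lt_j]; [|apply/andP; split]; lia.
Qed.

Lemma row_len_gt0 r : 0 < row_len alpha lam r -> 0 < r <= nrows alpha lam.
Proof. by rewrite /row_len /nrows; case: ifP => [|_]; [|case: ifP]; lia. Qed.

Lemma in_shape_row r j : j < row_len alpha lam r ->
  in_shape alpha lam k r (row_hi alpha lam k r - Posz j)%R.
Proof.
by move=> lt_j; rewrite in_shape_row_hi //; apply: row_len_gt0; apply: leq_ltn_trans lt_j.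
Qed.

Lemma in_shapeP r c : in_shape alpha lam k r c ->
  exists2 j, j < row_len alpha lam r & c = (row_hi alpha lam k r - Posz j)%R.
Proof.
case/andP=> _ /andP[le_lo le_hi].
by exists `|(row_hi alpha lam k r - c)%R|%N; lia.
Qed.

Lemma row_hi_stair r : r <= csize alpha -> row_hi alpha lam k r = Posz (size alpha).
Proof. by rewrite /row_hi => ->. Qed.

Lemma row_len_stair r : 0 < r <= csize alpha ->
  row_len alpha lam r = nth 0 (delta_rowlens alpha) r.-1.
Proof. by rewrite /row_len => ->. Qed.

Lemma in_shape_stair r i : 0 < r <= csize alpha ->
  in_shape alpha lam k r (Posz (size alpha) - Posz i)%R
  = (i < nth 0 (delta_rowlens alpha) r.-1).
Proof.
move=> r_stair; have /andP[r_gt0 le_r] := r_stair.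
rewrite -(row_hi_stair le_r) -(row_len_stair r_stair) in_shape_row_hi //.
by rewrite /nrows r_gt0; lia.
Qed.

Lemma row_len_base : row_len alpha lam (csize alpha).+1 = nth 0 lam 0.
Proof.
rewrite /row_len /nrows ltnn andbF ltnSn subSnn /=.
by case: lam => [|a lam'] /=; rewrite ?addn0 ?ltnn // addnS ltnS leq_addr.
Qed.

Lemma row_hi_base : row_hi alpha lam k (csize alpha).+1 = (Posz (nth 0%N lam 0) - Posz k)%R.
Proof. by rewrite /row_hi ltnn subSnn. Qed.

End Shape.

Section Words.

Variables (alpha lam : seq nat) (k : nat) (T : nat -> int -> nat).

Definition row_word r := [seq T r c | c <- row_cols alpha lam k r].

Definition top_rows_word r := flatten [seq row_word r' | r' <- iota 1 r].

Lemma row_wordE r :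
  row_word r = [seq T r (row_hi alpha lam k r - Posz j)%R | j <- iota 0 (row_len alpha lam r)].
Proof. by rewrite /row_word /row_cols -map_comp. Qed.

Lemma top_rows_wordS r : top_rows_word r.+1 = top_rows_word r ++ row_word r.+1.
Proof. by rewrite /top_rows_word -[r.+1]addn1 iotaD map_cat flatten_cat /= cats0 add1n addnC. Qed.

Lemma reading_word_split r : r < nrows alpha lam ->
  exists s, reading_word alpha lam k T = top_rows_word r ++ row_word r.+1 ++ s.
Proof.
move=> lt_r; rewrite /reading_word -[nrows _ _](subnKC lt_r) -[r.+1]addn1 -addnA.
rewrite iotaD map_cat flatten_cat iotaD map_cat flatten_cat /= -catA add1n !addn1.
by eexists.
Qed.

End Words.

Section LatticeTableau.

Variables (alpha lam : seq nat) (k : nat) (T : nat -> int -> nat).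
Hypothesis ssyt_T : is_SSYT alpha lam k T.
Hypothesis lattice_T : lattice (reading_word alpha lam k T).

Local Notation entry r j := (T r (row_hi alpha lam k r - Posz j)%R) (r in scope nat_scope).
Local Notation stair_entry r i := (T r (Posz (size alpha) - Posz i)%R).

Lemma lattice_row r j x : j < row_len alpha lam r -> entry r j = x -> 1 < x ->
  count_mem x (top_rows_word alpha lam k T r.-1) + count (fun j' => entry r j' == x) (iota 0 j)
  < count_mem x.-1 (top_rows_word alpha lam k T r.-1).
Proof.
move=> lt_j Tj gt1x; case: ssyt_T => _ row_mono _.
have /andP[r_gt0 le_r] : 0 < r <= nrows alpha lam.
  by apply: row_len_gt0; apply: leq_ltn_trans lt_j.
set U := fun j' => entry r j'.
have [s word_split] : exists s, reading_word alpha lam k T =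
    top_rows_word alpha lam k T r.-1 ++ map U (iota 0 j) ++ x :: s.
  have [s ->] : exists s, reading_word alpha lam k T =
      top_rows_word alpha lam k T r.-1 ++ row_word alpha lam k T r.-1.+1 ++ s.
    by apply: reading_word_split; lia.
  rewrite prednK // row_wordE.
  have -> : (row_len alpha lam r = j + (row_len alpha lam r - j.+1).+1)%N by lia.
  by rewrite iotaD map_cat -catA /= add0n Tj; eexists.
move: lattice_T; rewrite word_split => /lattice_count_lt/(_ gt1x).
rewrite count_map; apply.
apply/allP => _ /mapP[j' + ->]; rewrite mem_iota -Tj => /andP[_ lt_j'].
by apply: row_mono; try apply: in_shape_row; lia.
Qed.

(* Rows [1..r] of the staircase carry the filling whose columns read 1, 2, ...
   downwards from their top boxes. *)
Definition stair_canonical_upto r := forall r' i, 0 < r' <= r ->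
  i < nth 0 (delta_rowlens alpha) r'.-1 ->
  stair_entry r' i = col_height alpha r' i.

Lemma count_top_rows_word r v : stair_canonical_upto r -> r <= csize alpha -> 0 < v ->
  count_mem v (top_rows_word alpha lam k T r)
  = count (fun i => v <= col_height alpha r i) (iota 0 (size alpha)).
Proof.
elim: r => [|r IH] canon le_r v_gt0.
  rewrite [RHS](eq_count (a2 := pred0)) ?count_pred0 // => i.
  by rewrite /col_height take0; case: v v_gt0.
have canon_r : stair_canonical_upto r by move=> r' i le_r'; apply: canon; lia.
rewrite top_rows_wordS count_cat IH ?(ltnW le_r) // row_wordE.
rewrite row_len_stair ?row_hi_stair ?count_map //=; try lia.
set L := nth 0 (delta_rowlens alpha) r.
rewrite [count _ (iota 0 L)](eq_in_count (a2 := fun i => col_height alpha r.+1 i == v)); last first.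
  by move=> i; rewrite mem_iota => lt_i /=; rewrite canon //; lia.
rewrite (count_iota_prefix _ (delta_rowlens_leq alpha r)).
apply: eq_count_add => i; rewrite col_heightS //=.
by case: (i < L); case: ltngtP; rewrite /= ?addn0 ?addn1; lia.
Qed.

Lemma stair_lower r i : stair_canonical_upto r -> r < csize alpha ->
  i < nth 0 (delta_rowlens alpha) r ->
  col_height alpha r.+1 i <= stair_entry r.+1 i.
Proof.
move=> canon lt_r lt_i; case: ssyt_T => T_gt0 _ col_strict.
rewrite col_heightS // lt_i addn1.
have [->|ch_gt0] := posnP (col_height alpha r i).
  by apply: T_gt0; rewrite in_shape_stair //; lia.
have [r_gt0 lt_i_prev] := col_height_gt0 ch_gt0 (ltnW lt_r).
rewrite -canon //; last by lia.
by apply: col_strict; rewrite ?in_shape_stair //; lia.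
Qed.

Lemma stair_upper r i : stair_canonical_upto r -> r < csize alpha ->
  (forall i', i' < i -> stair_entry r.+1 i' = col_height alpha r.+1 i') ->
  i < nth 0 (delta_rowlens alpha) r ->
  stair_entry r.+1 i <= col_height alpha r.+1 i.
Proof.
move=> canon lt_r canon_left lt_i.
set x := T r.+1 _; rewrite leqNgt; apply/negP => big_x.
have ch_S := col_heightS i lt_r; rewrite lt_i addn1 in ch_S.
have gt1x : 1 < x by lia.
have := @lattice_row r.+1 i x; rewrite /= row_hi_stair ?row_len_stair //.
move=> /(_ lt_i erefl gt1x).
have predx_gt0 : 0 < x.-1 by lia.
rewrite !count_top_rows_word ?(ltnW lt_r) ?(ltnW gt1x) //.
rewrite count_leq_pred ?(ltnW gt1x) //.
suff : count (fun i' => col_height alpha r i' == x.-1) (iota 0 (size alpha))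
  <= count (fun i' => stair_entry r.+1 i' == x) (iota 0 i) by lia.
rewrite (@count_iota_prefix _ i (size alpha)); last first.
  by apply: leq_trans (delta_rowlens_leq alpha r); apply: ltnW.
apply: sub_in_count => i' _ /= /eqP ch_i'.
have lt_i'i : i' < i.
  by rewrite ltnNge; apply/negP => /(col_height_anti alpha r); lia.
rewrite lt_i'i canon_left // col_heightS // ch_i' (ltn_trans lt_i'i lt_i) /=.
by apply/eqP; lia.
Qed.

Lemma stair_canonical r : r <= csize alpha -> stair_canonical_upto r.
Proof.
elim: r => [_ r' i|r IH lt_r]; first by lia.
have canon := IH (ltnW lt_r).
move=> r' i /andP[r'_gt0]; rewrite leq_eqVlt ltnS => /predU1P[-> /=|]; last first.
  by move=> le_r' lt_i; apply: canon => //; rewrite r'_gt0.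
elim/ltn_ind: i => i IHi lt_i; apply/eqP; rewrite eqn_leq.
rewrite stair_upper ?stair_lower // => i' lt_i'.
by apply: IHi => //; apply: ltn_trans lt_i.
Qed.

Lemma count_stair_word v : 0 < v ->
  count_mem v (top_rows_word alpha lam k T (csize alpha))
  = count (fun i => v <= sumn (drop i alpha)) (iota 0 (size alpha)).
Proof.
move=> v_gt0; rewrite count_top_rows_word //; last exact: stair_canonical.
by apply: eq_count => i; rewrite col_height_full.
Qed.

Lemma row_entry_gt0 r j : j < row_len alpha lam r -> 0 < entry r j.
Proof. by case: ssyt_T => T_gt0 _ _ /(in_shape_row k)/T_gt0. Qed.

Section FirstFoundationRow.

Hypothesis comp_alpha : is_composition alpha.
Hypothesis base_le : nth 0 lam 0 - k <= size alpha.

Local Notation r1 := (csize alpha).+1.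
Local Notation base j := (entry r1 j).

Lemma base_row_count j x : j < row_len alpha lam r1 -> base j = x -> 1 < x ->
  (count (fun j' => base j' == x) (iota 0 j)).+1
  <= count (fun i => sumn (drop i alpha) == x.-1) (iota 0 (size alpha)).
Proof.
move=> lt_j Tj gt1x.
have := lattice_row lt_j Tj gt1x.
by rewrite /= !count_stair_word ?count_leq_pred //; lia.
Qed.

(* The box above lies in the bottom row of the staircase. *)
Lemma base_row_gt1 j : j < row_len alpha lam r1 - k -> 1 < base j.
Proof.
rewrite row_len_base => lt_j; case: ssyt_T => T_gt0 _ col_strict.
set i := size alpha + k + j - nth 0 lam 0.
have lt_i : i < size alpha by rewrite /i; lia.
have column : (row_hi alpha lam k r1 - Posz j = Posz (size alpha) - Posz i)%R.
  by rewrite row_hi_base /i; lia.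
have h_gt0 : 0 < col_height alpha (csize alpha) i.
  by rewrite col_height_full; have := sumn_drop_ltn comp_alpha lt_i lt_i; rewrite drop_size.
have [stair_gt0 lt_i_last] := col_height_gt0 h_gt0 (leqnn _).
have in_last : in_shape alpha lam k (csize alpha) (Posz (size alpha) - Posz i)%R.
  by rewrite in_shape_stair ?stair_gt0 ?leqnn.
have in_base : in_shape alpha lam k r1 (Posz (size alpha) - Posz i)%R.
  by rewrite -column in_shape_row // row_len_base; lia.
rewrite column; have := col_strict _ _ _ in_last in_base (ltnSn _).
by have := T_gt0 _ _ in_last; lia.
Qed.

Lemma base_row_Rset j : j < row_len alpha lam r1 -> Rset alpha k (base j).
Proof.
move=> lt_j; have [gt1|le1] := ltnP 1 (base j).
  have /(leq_trans (ltn0Sn _)) := base_row_count lt_j erefl gt1.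
  rewrite -has_count => /hasP[i]; rewrite mem_iota => /andP[_ lt_i] /eqP h_i.
  by rewrite -(prednK (ltnW gt1)) -h_i -add1n Rset_sumn_drop.
have base_gt0 := row_entry_gt0 lt_j.
apply/orP; right; apply/andP; split; last by apply/eqP; lia.
rewrite lt0n; apply/eqP => k0; move: (@base_row_gt1 j) le1; rewrite k0 subn0.
by move=> /(_ lt_j); lia.
Qed.

Lemma count_base_row_eq1 :
  count (fun j => base j == 1) (iota 0 (row_len alpha lam r1)) <= k.
Proof.
set l := row_len alpha lam r1.
apply: (@leq_trans (count (leq (l - k)) (iota 0 l))); last by rewrite count_iota_geq; lia.
apply: sub_in_count => j _ /= /eqP base1.
by rewrite leqNgt; apply/negP => /base_row_gt1; rewrite base1.
Qed.

Lemma count_base_row_le1 v : v != 1 ->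
  count (fun j => base j == v) (iota 0 (row_len alpha lam r1)) <= 1.
Proof.
move=> v_ne1; apply: count_iota_le1 => j lt_j /eqP base_v.
have := row_entry_gt0 lt_j; rewrite base_v => v_gt0.
have gt1v : 1 < v by rewrite ltn_neqAle eq_sym v_ne1.
move: (base_row_count lt_j base_v gt1v).
move/leq_trans/(_ (count_sumn_drop_le1 v.-1 comp_alpha)).
by rewrite ltnS leqn0 => /eqP.
Qed.

End FirstFoundationRow.

End LatticeTableau.

Unset Implicit Arguments.

Theorem mainTheorem1 (alpha lam : seq nat) (k : nat) (T : nat -> int -> nat) :
  is_composition alpha ->
  is_partition lam ->
  (nth 0 lam 0 - k <= size alpha)%N ->
  is_SSYT alpha lam k T ->
  lattice (reading_word alpha lam k T) ->
  let r1 := (csize alpha).+1 in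
  [/\ (forall c, in_shape alpha lam k r1 c -> Rset alpha k (T r1 c)),
      (count (fun c => T r1 c == 1%N) (row_cols alpha lam k r1) <= k)%N &
      (forall v, v != 1%N ->
         (count (fun c => T r1 c == v) (row_cols alpha lam k r1) <= 1)%N)].
Proof.
move=> comp_alpha _ base_le ssyt_T lattice_T r1.
split.
- by move=> c /in_shapeP[j lt_j ->]; apply: base_row_Rset.
- by rewrite count_map; apply: count_base_row_eq1.
- by move=> v v_ne1; rewrite count_map; apply: count_base_row_le1.
Qed.
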